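(* Let $P_0,P_1,P_2\in\mathbb H$ be distinct, labelled so that $\chi:=\langle P_0\tilde\times P_1,P_2\rangle\ge0$ and so that $d_0=\max\{d_0,d_1,d_2\}$, where $d_i:=\sqrt{1-2\langle P_{i+1},P_{i+2}\rangle}$ for $i\in\mathbb Z/3\mathbb Z$. Let $\varepsilon\in\{-1,1\}$, $\alpha:=-1+\langle P_0,P_1\rangle+\langle P_1,P_2\rangle+\langle P_2,P_0\rangle$, $\gamma:=3(d_0^2+1)(d_1^2+1)(d_2^2+1)$, $$r_d:=\frac4\gamma\Bigl(-2\alpha(d_0d_1d_2-d_0-d_1-d_2)-2\varepsilon\chi(d_0d_1+d_1d_2+d_2d_0-1)\Bigr),\qquad r_i:=\frac{|r_d|}{d_{i+1}+d_{i+2}}.$$ Then for every $i\in\mathbb Z/3\mathbb Z$, $$r_i\le\rho:=\frac23+\frac2{27}+\frac1{3\sqrt3}\approx0.93319.$$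
   Context: $\langle v,w\rangle=-v_1w_1+v_2w_2+v_3w_3$ on $\mathbb R^3$; $\mathbb H=\{P\in\mathbb R^3:\langle P,P\rangle=-1,\ P_1\ge1\}$; $v\tilde\times w:=J(v\times w)$ with $J=\mathrm{diag}(-1,1,1)$ and $\times$ the Euclidean cross product. *)

From Stdlib Require Import Reals.
Open Scope R_scope.

Definition vec3 : Type := (R * R * R)%type.

Definition c1 (v : vec3) : R := fst (fst v).
Definition c2 (v : vec3) : R := snd (fst v).
Definition c3 (v : vec3) : R := snd v.

Definition lor (v w : vec3) : R := - c1 v * c1 w + c2 v * c2 w + c3 v * c3 w.

Definition inH (P : vec3) : Prop := lor P P = -1 /\ 1 <= c1 P.

Definition cross (v w : vec3) : vec3 :=
  (c2 v * c3 w - c3 v * c2 w, c3 v * c1 w - c1 v * c3 w, c1 v * c2 w - c2 v * c1 w).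

Definition Jmap (v : vec3) : vec3 := (- c1 v, c2 v, c3 v).

Definition lcross (v w : vec3) : vec3 := Jmap (cross v w).

Definition dq (P Q : vec3) : R := sqrt (1 - 2 * lor P Q).

Definition rho : R := 2/3 + 2/27 + 1 / (3 * sqrt 3).

From Pilot Require Import Defs.
From Stdlib Require Import Reals Lra Psatz.
Open Scope R_scope.

(* The numerator of [rd] is a dot product [A X + B Y] in R^2 with
   [A = -2 alpha], [B = -2 eps chi], [X = d0 d1 d2 - d0 - d1 - d2],
   [Y = d0 d1 + d1 d2 + d2 d0 - 1].  Both vectors have squared length
   [(d0^2+1)(d1^2+1)(d2^2+1) = gamma / 3]: for (X, Y) this is an identity, for
   (A, B) it follows from the Gram determinant formula for [chi^2].  Hence
   Cauchy-Schwarz gives [|rd| <= 4/3], and since every [d_i >= 1] on the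
   hyperboloid, each [r_i <= 2/3 < rho]. *)

Lemma lor_inH_le_m1 (P Q : vec3) : inH P -> inH Q -> lor P Q <= -1.
Proof.
  destruct P as [[p1 p2] p3], Q as [[q1 q2] q3].
  unfold inH, lor, Defs.c1, Defs.c2, Defs.c3; simpl; intros [HP HP1] [HQ HQ1].
  (* (1 + |p|^2)(1 + |q|^2) - (1 + p.q)^2 = |p - q|^2 + (p x q)^2 for the spatial parts. *)
  assert (Hsq : (1 + (p2 * q2 + p3 * q3)) ^ 2 <= (p1 * q1) ^ 2).
  { assert (Hsos : 0 <= (p2 - q2) ^ 2 + (p3 - q3) ^ 2 + (p2 * q3 - p3 * q2) ^ 2)
      by (repeat apply Rplus_le_le_0_compat; apply pow2_ge_0).
    rewrite Rpow_mult_distr.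
    assert (p1 ^ 2 = 1 + p2 ^ 2 + p3 ^ 2) as -> by lra.
    assert (q1 ^ 2 = 1 + q2 ^ 2 + q3 ^ 2) as -> by lra.
    nra. }
  assert (1 <= p1 * q1) by nra.
  nra.
Qed.

Lemma dq_sq (P Q : vec3) : lor P Q <= 1 / 2 -> dq P Q ^ 2 = 1 - 2 * lor P Q.
Proof. intros H; unfold dq; rewrite <- Rsqr_pow2; apply Rsqr_sqrt; lra. Qed.

Lemma dq_ge1 (P Q : vec3) : lor P Q <= 0 -> 1 <= dq P Q.
Proof. intros H; unfold dq; rewrite <- sqrt_1 at 1; apply sqrt_le_1_alt; lra. Qed.

(* [lor (lcross u v) w = det [u v w]], and the Gram matrix of [u, v, w] is
   [M^T J M] with [det J = -1]. *)
Lemma lor_lcross_sq (u v w : vec3) :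
  lor (lcross u v) w ^ 2 =
  - (lor u u * lor v v * lor w w + 2 * lor u v * lor v w * lor w u
     - lor u u * lor v w ^ 2 - lor v v * lor w u ^ 2 - lor w w * lor u v ^ 2).
Proof.
  destruct u as [[u1 u2] u3], v as [[v1 v2] v3], w as [[w1 w2] w3].
  unfold lor, lcross, Jmap, cross, Defs.c1, Defs.c2, Defs.c3; simpl; ring.
Qed.

Lemma lor_lcross_sq_inH (P0 P1 P2 : vec3) : inH P0 -> inH P1 -> inH P2 ->
  lor (lcross P0 P1) P2 ^ 2 =
  1 - lor P1 P2 ^ 2 - lor P2 P0 ^ 2 - lor P0 P1 ^ 2
  - 2 * lor P1 P2 * lor P2 P0 * lor P0 P1.
Proof.
  intros [H0 _] [H1 _] [H2 _].
  rewrite lor_lcross_sq, H0, H1, H2; ring.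
Qed.

Lemma Rabs_dot2_le (A B X Y K : R) :
  A ^ 2 + B ^ 2 = K -> X ^ 2 + Y ^ 2 = K -> Rabs (A * X + B * Y) <= K.
Proof.
  intros HAB HXY.
  assert (HK : 0 <= K) by (rewrite <- HAB; nra).
  rewrite <- (Rabs_pos_eq K HK).
  apply Rsqr_le_abs_0; unfold Rsqr.
  assert (Hlag : (A * X + B * Y) ^ 2 + (A * Y - B * X) ^ 2 = (A ^ 2 + B ^ 2) * (X ^ 2 + Y ^ 2))
    by ring.
  rewrite HAB, HXY in Hlag.
  pose proof (pow2_ge_0 (A * Y - B * X)).
  lra.
Qed.

(* Squared modulus of [(1 + i d0)(1 + i d1)(1 + i d2)]. *)
Lemma sym_poly_sq_sum (d0 d1 d2 : R) :
  (d0 * d1 * d2 - d0 - d1 - d2) ^ 2 + (d0 * d1 + d1 * d2 + d2 * d0 - 1) ^ 2 =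
  (d0 ^ 2 + 1) * (d1 ^ 2 + 1) * (d2 ^ 2 + 1).
Proof. ring. Qed.

Lemma alpha_chi_sq_sum (a b c chi eps d0 d1 d2 : R) :
  d0 ^ 2 = 1 - 2 * a -> d1 ^ 2 = 1 - 2 * b -> d2 ^ 2 = 1 - 2 * c ->
  chi ^ 2 = 1 - a ^ 2 - b ^ 2 - c ^ 2 - 2 * a * b * c -> eps ^ 2 = 1 ->
  (- 2 * (-1 + c + a + b)) ^ 2 + (- 2 * eps * chi) ^ 2 =
  (d0 ^ 2 + 1) * (d1 ^ 2 + 1) * (d2 ^ 2 + 1).
Proof.
  intros -> -> -> Hchi Heps.
  replace ((- 2 * eps * chi) ^ 2) with (4 * eps ^ 2 * chi ^ 2) by ring.
  rewrite Heps, Hchi; ring.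
Qed.

Lemma Rabs_rd_le (a b c chi eps d0 d1 d2 : R) :
  d0 ^ 2 = 1 - 2 * a -> d1 ^ 2 = 1 - 2 * b -> d2 ^ 2 = 1 - 2 * c ->
  chi ^ 2 = 1 - a ^ 2 - b ^ 2 - c ^ 2 - 2 * a * b * c -> eps ^ 2 = 1 ->
  Rabs (4 / (3 * (d0 ^ 2 + 1) * (d1 ^ 2 + 1) * (d2 ^ 2 + 1)) *
      (- 2 * (-1 + c + a + b) * (d0 * d1 * d2 - d0 - d1 - d2)
       - 2 * eps * chi * (d0 * d1 + d1 * d2 + d2 * d0 - 1))) <= 4 / 3.
Proof.
  intros H0 H1 H2 Hchi Heps.
  set (K := (d0 ^ 2 + 1) * (d1 ^ 2 + 1) * (d2 ^ 2 + 1)).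
  assert (HK : 0 < K) by (unfold K; repeat apply Rmult_lt_0_compat; nra).
  pose proof (Rabs_dot2_le _ _ _ _ _
    (alpha_chi_sq_sum _ _ _ _ _ _ _ _ H0 H1 H2 Hchi Heps) (sym_poly_sq_sum d0 d1 d2)) as Hnum.
  replace (3 * (d0 ^ 2 + 1) * (d1 ^ 2 + 1) * (d2 ^ 2 + 1)) with (3 * K) by (unfold K; ring).
  rewrite Rabs_mult, Rabs_pos_eq by (apply Rlt_le, Rdiv_lt_0_compat; lra).
  replace (- 2 * (-1 + c + a + b) * (d0 * d1 * d2 - d0 - d1 - d2)
           - 2 * eps * chi * (d0 * d1 + d1 * d2 + d2 * d0 - 1))
    with (- 2 * (-1 + c + a + b) * (d0 * d1 * d2 - d0 - d1 - d2)
          + - 2 * eps * chi * (d0 * d1 + d1 * d2 + d2 * d0 - 1)) by ring.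
  apply Rle_trans with (4 / (3 * K) * K).
  - apply Rmult_le_compat_l; [apply Rlt_le, Rdiv_lt_0_compat; lra | exact Hnum].
  - right; field; lra.
Qed.

Lemma two_thirds_le_rho : 2 / 3 <= rho.
Proof.
  unfold rho.
  assert (0 < sqrt 3) by (apply sqrt_lt_R0; lra).
  assert (0 < 1 / (3 * sqrt 3)) by (apply Rdiv_lt_0_compat; lra).
  lra.
Qed.

Theorem proposition5p1 (P0 P1 P2 : vec3) (eps : R) :
  inH P0 -> inH P1 -> inH P2 ->
  P0 <> P1 -> P1 <> P2 -> P2 <> P0 ->
  (eps = 1 \/ eps = -1) ->
  let chi := lor (lcross P0 P1) P2 in
  let d0 := dq P1 P2 in
  let d1 := dq P2 P0 in
  let d2 := dq P0 P1 in
  0 <= chi ->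
  d1 <= d0 -> d2 <= d0 ->
  let alpha := -1 + lor P0 P1 + lor P1 P2 + lor P2 P0 in
  let gamma := 3 * (d0 ^ 2 + 1) * (d1 ^ 2 + 1) * (d2 ^ 2 + 1) in
  let rd := 4 / gamma *
      (- 2 * alpha * (d0 * d1 * d2 - d0 - d1 - d2)
       - 2 * eps * chi * (d0 * d1 + d1 * d2 + d2 * d0 - 1)) in
  let r0 := Rabs rd / (d1 + d2) in
  let r1 := Rabs rd / (d2 + d0) in
  let r2 := Rabs rd / (d0 + d1) in
  r0 <= rho /\ r1 <= rho /\ r2 <= rho.
Proof.
  intros H0 H1 H2 _ _ _ Heps chi d0 d1 d2 _ _ _ alpha gamma rd r0 r1 r2.
  pose proof (lor_inH_le_m1 _ _ H1 H2) as L0.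
  pose proof (lor_inH_le_m1 _ _ H2 H0) as L1.
  pose proof (lor_inH_le_m1 _ _ H0 H1) as L2.
  assert (Hrd : Rabs rd <= 4 / 3).
  { apply Rabs_rd_le with (a := lor P1 P2) (b := lor P2 P0) (c := lor P0 P1);
      try (apply dq_sq; lra).
    - apply lor_lcross_sq_inH; assumption.
    - destruct Heps as [-> | ->]; ring. }
  assert (Hr : forall s, 2 <= s -> Rabs rd / s <= rho).
  { intros s Hs.
    apply Rle_trans with (2 / 3); [| exact two_thirds_le_rho].
    apply Rmult_le_reg_r with s; [lra |].
    unfold Rdiv; rewrite Rmult_assoc, Rinv_l by lra.
    pose proof (Rabs_pos rd); nra. }
  assert (G0 : 1 <= d0) by (apply dq_ge1; lra).
  assert (G1 : 1 <= d1) by (apply dq_ge1; lra).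
  assert (G2 : 1 <= d2) by (apply dq_ge1; lra).
  repeat split; apply Hr; lra.
Qed.
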